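(* Let $G$ be a directed acyclic graph on $[n]$ and $H\subseteq G$ a subgraph. Then $\tilde Q_H$ is a face of $\tilde Q_G$ if and only if the multigraph $H_{comp}$ is loopless and has no directed cycles.
   Context: Conventions: $G$ is a directed acyclic graph with vertex set $[n]$, every edge $(i,j)\in E(G)$ satisfying $i<j$. A subgraph $H\subseteq G$ means $V(H)=[n]$ and $E(H)\subseteq E(G)$; $H^{un}$ is the underlying undirected graph of $H$. $\tilde Q_G=\mathrm{conv}(\{\mathbf 0\}\cup\{\mathbf e_i-\mathbf e_j:(i,j)\in E(G)\})\subset\mathbb R^n$, similarly $\tilde Q_H$. The directed multigraph $H_{comp}$ has as vertices the connected components of $H^{un}$, and for each edge $(u,v)\in E(G)\setminus E(H)$ one edge from the component containing $u$ to the component containing $v$ (so $H_{comp}$ may have multiple edges, loops, and directed cycles). *)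

From HB Require Import structures.
From mathcomp Require Import all_boot all_order all_algebra.
Set Implicit Arguments. Unset Strict Implicit. Unset Printing Implicit Defensive.
Import Order.TTheory GRing.Theory Num.Theory.
Local Open Scope ring_scope.

(* Vertices [n] are represented by 'I_n; a (directed) graph on [n] is its edge
   set E : {set 'I_n * 'I_n}.  Vectors of R^n are row vectors 'rV[R]_n. *)

Definition unitv (R : ringType) (n : nat) (i : 'I_n) : 'rV[R]_n :=
  \row_k (k == i)%:R.

(* G is a DAG in the paper's convention: every edge (i,j) has i < j. *)
Definition dag_edges (n : nat) (E : {set 'I_n * 'I_n}) : Prop :=
  forall e, e \in E -> (e.1 < e.2)%N.

(* x lies in conv({0} ∪ {e_i - e_j : (i,j) ∈ E}) *)
Definition inQ (R : realFieldType) (n : nat) (E : {set 'I_n * 'I_n})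
  (x : 'rV[R]_n) : Prop :=
  exists (lam0 : R) (lam : 'I_n * 'I_n -> R),
    [/\ 0 <= lam0, (forall e, e \in E -> 0 <= lam e),
        lam0 + \sum_(e in E) lam e = 1 &
        x = \sum_(e in E) lam e *: (unitv R e.1 - unitv R e.2)].

Definition dotv (R : ringType) (n : nat) (c x : 'rV[R]_n) : R :=
  \sum_(k < n) c 0 k * x 0 k.

Definition is_face (R : realFieldType) (n : nat) (P F : 'rV[R]_n -> Prop) : Prop :=
  exists (c : 'rV[R]_n) (b : R),
    (forall x, P x -> dotv c x <= b) /\
    (forall x, F x <-> (P x /\ dotv c x = b)).

Definition un_rel (n : nat) (H : {set 'I_n * 'I_n}) : rel 'I_n :=
  fun x y => ((x, y) \in H) || ((y, x) \in H).

Definition same_comp (n : nat) (H : {set 'I_n * 'I_n}) (x y : 'I_n) : bool :=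
  connect (un_rel H) x y.

(* H_comp is loopless: no edge of G \ H joins two vertices of one component *)
Definition comp_loopless (n : nat) (G H : {set 'I_n * 'I_n}) : Prop :=
  forall e, e \in G :\: H -> ~~ same_comp H e.1 e.2.

(* Edge of H_comp between distinct components, lifted to representatives:
   compE x y iff there is an edge (u,v) of G \ H with u in comp(x), v in comp(y),
   and comp(x) <> comp(y). *)
Definition compE (n : nat) (G H : {set 'I_n * 'I_n}) : rel 'I_n :=
  fun x y => [exists e in G :\: H,
                 same_comp H x e.1 && same_comp H e.2 y] && ~~ same_comp H x y.

Definition comp_acyclic (n : nat) (G H : {set 'I_n * 'I_n}) : Prop :=
  ~ exists x y, compE G H x y /\ connect (compE G H) y x.

From HB Require Import structures.
From mathcomp Require Import all_boot all_order all_algebra.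
From mathcomp Require Import lra.
Set Implicit Arguments. Unset Strict Implicit. Unset Printing Implicit Defensive.
Import Order.TTheory GRing.Theory Num.Theory.
Local Open Scope ring_scope.

(* Both conditions are equivalent to the existence of a potential phi on the
   vertices that is constant along the edges of H and strictly increasing
   along the edges of G \ H.  Such a phi, read as a linear functional,
   cuts Q_H out of Q_G on the valid inequality phi.x <= 0; conversely a
   face functional is such a potential, because an e_u - e_v lying in Q_H
   forces (u,v) into H.  A potential is constant on components and strictly
   increasing along H_comp, which rules out loops and cycles; conversely, if
   H_comp is loopless and acyclic, the number of vertices from which x is
   reachable along G-edges and reversed H-edges is such a potential. *)

Lemma connect_propagate {T : finType} {r : rel T} (Q : T -> Prop) {a b} :
  (forall u v, Q u -> r u v -> Q v) -> Q a -> connect r a b -> Q b.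
Proof.
move=> Qr Qa /connectP[p rp ->]; elim: p a Qa rp => //= z p IHp a Qa /andP[raz rp].
exact: IHp (Qr _ _ Qa raz) rp.
Qed.

Section Polytope.
Variables (R : realFieldType) (n : nat).
Implicit Types (c x y : 'rV[R]_n) (E : {set 'I_n * 'I_n}).

Lemma dotv_sum c (I : Type) (r : seq I) (P : pred I) (F : I -> 'rV[R]_n) :
  dotv c (\sum_(i <- r | P i) F i) = \sum_(i <- r | P i) dotv c (F i).
Proof.
rewrite /dotv; under eq_bigr do rewrite summxE mulr_sumr.
exact: exchange_big.
Qed.

Lemma dotvZ c a x : dotv c (a *: x) = a * dotv c x.
Proof. by rewrite /dotv mulr_sumr; apply: eq_bigr => k _; rewrite mxE mulrCA. Qed.

Lemma dotvB c x y : dotv c (x - y) = dotv c x - dotv c y.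
Proof. by rewrite /dotv -sumrB; apply: eq_bigr => k _; rewrite !mxE mulrBr. Qed.

Lemma dotv0 c : dotv c 0 = 0.
Proof. by rewrite /dotv big1 // => k _; rewrite mxE mulr0. Qed.

Lemma dotv_unitv c i : dotv c (unitv R i) = c 0 i.
Proof.
rewrite /dotv (bigD1 i) //= big1 ?addr0; first by rewrite mxE eqxx mulr1.
by move=> k /negbTE ki; rewrite mxE ki mulr0.
Qed.

Lemma dotv_edge c (e : 'I_n * 'I_n) :
  dotv c (unitv R e.1 - unitv R e.2) = c 0 e.1 - c 0 e.2.
Proof. by rewrite dotvB !dotv_unitv. Qed.

Lemma dotv_comb c E (lam : 'I_n * 'I_n -> R) :
  dotv c (\sum_(e in E) lam e *: (unitv R e.1 - unitv R e.2)) =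
  \sum_(e in E) lam e * (c 0 e.1 - c 0 e.2).
Proof. by rewrite dotv_sum; apply: eq_bigr => e _; rewrite dotvZ dotv_edge. Qed.

Lemma inQ0 E : inQ E (0 : 'rV[R]_n).
Proof.
exists 1, (fun _ => 0); split => //; first by rewrite big1 ?addr0.
by rewrite big1 // => e _; rewrite scale0r.
Qed.

Lemma inQ_edge E e : e \in E -> inQ E (unitv R e.1 - unitv R e.2).
Proof.
move=> eE; exists 0, (fun f => (f == e)%:R); split => //.
  by rewrite add0r (bigD1 e) //= eqxx big1 ?addr0 // => f /andP[_ /negbTE ->].
rewrite (bigD1 e) //= eqxx scale1r big1 ?addr0 // => f /andP[_ /negbTE ->].
by rewrite scale0r.
Qed.

Lemma big_setD_eq0 {V : nmodType} {E E'} {F : 'I_n * 'I_n -> V} :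
  E' \subset E -> (forall e, e \in E :\: E' -> F e = 0) ->
  \sum_(e in E) F e = \sum_(e in E') F e.
Proof.
move=> sE'E F0; rewrite (big_setID E') /= (setIidPr sE'E) [X in _ + X]big1 ?addr0 //.
Qed.

Lemma inQ_subset E E' x : E' \subset E -> inQ E' x -> inQ E x.
Proof.
move=> sE'E [l0 [l [l0_ge0 l_ge0 l_sum ->]]].
pose l' e := if e \in E' then l e else 0.
have l'0 e : e \in E :\: E' -> l' e = 0 by rewrite /l' in_setD => /andP[/negbTE ->].
exists l0, l'; split => //.
- by move=> e _; rewrite /l'; case: ifP => // /l_ge0.
- rewrite (big_setD_eq0 sE'E l'0) -l_sum; congr (_ + _).
  by apply: eq_bigr => e; rewrite /l' => ->.
- rewrite (big_setD_eq0 sE'E) => [|e /l'0 ->]; last by rewrite scale0r.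
  by apply: eq_bigr => e; rewrite /l' => ->.
Qed.

Lemma inQ_restrict E E' x (l0 : R) (l : 'I_n * 'I_n -> R) :
  E' \subset E -> 0 <= l0 -> (forall e, e \in E -> 0 <= l e) ->
  l0 + \sum_(e in E) l e = 1 ->
  x = \sum_(e in E) l e *: (unitv R e.1 - unitv R e.2) ->
  (forall e, e \in E :\: E' -> l e = 0) -> inQ E' x.
Proof.
move=> sE'E l0_ge0 l_ge0 l_sum -> l0E; exists l0, l; split => //.
- by move=> e /(subsetP sE'E) /l_ge0.
- by rewrite -l_sum (big_setD_eq0 sE'E).
- by rewrite (big_setD_eq0 sE'E) // => e /l0E ->; rewrite scale0r.
Qed.

(* Test against d := e_u - e_v: d.d = 2, while d.(e_a - e_b) <= 1 unless
   (a,b) = (u,v), so a convex combination avoiding (u,v) has d-value <= 1. *)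
Lemma mem_of_inQ_edge E e :
  e.1 != e.2 -> inQ E (unitv R e.1 - unitv R e.2) -> e \in E.
Proof.
move=> e12 [l0 [l [l0_ge0 l_ge0 l_sum hx]]]; apply: contraT => eNE.
set d := unitv R e.1 - unitv R e.2 in hx.
have d_e : d 0 e.1 - d 0 e.2 = 2.
  by rewrite !mxE !eqxx (negbTE e12) eq_sym (negbTE e12) /=; lra.
have d_le1 f : f \in E -> d 0 f.1 - d 0 f.2 <= 1.
  move=> fE; have fNe : ~~ ((f.1 == e.1) && (f.2 == e.2)).
    apply: contraNN eNE => /andP[/eqP f1 /eqP f2].
    by rewrite [e]surjective_pairing -f1 -f2 -surjective_pairing.
  rewrite !mxE; move: (ler0n R (f.1 == e.2)) (ler0n R (f.2 == e.1)) fNe.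
  by case: (f.1 == e.1); case: (f.2 == e.2) => //= *; lra.
have := congr1 (dotv d) hx; rewrite dotv_comb dotv_edge d_e => d_sum.
have : \sum_(f in E) l f * (d 0 f.1 - d 0 f.2) <= \sum_(f in E) l f.
  by apply: ler_sum => f fE; have := l_ge0 f fE; have := d_le1 f fE; nra.
rewrite -d_sum => bound; exfalso; lra.
Qed.

End Polytope.

Section Components.
Variables (n : nat) (G H : {set 'I_n * 'I_n}).

Lemma same_compC x y : same_comp H x y = same_comp H y x.
Proof.
by rewrite /same_comp; apply: sym_connect_sym => u v; rewrite /un_rel orbC.
Qed.

Lemma compE_of_edge {e x} : comp_loopless G H -> e \in G :\: H ->
  same_comp H x e.1 -> compE G H x e.2.
Proof.
move=> loopless eGH xe1; apply/andP; split.
  by apply/existsP; exists e; rewrite eGH xe1 /same_comp connect0.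
apply: contraNN (loopless e eGH) => xe2.
by apply: connect_trans xe2; rewrite -/(same_comp H _ _) same_compC.
Qed.

Definition separating {d : Order.disp_t} {T : porderType d} (phi : 'I_n -> T) :=
  (forall e, e \in H -> phi e.1 = phi e.2) /\
  (forall e, e \in G :\: H -> (phi e.1 < phi e.2)%O).

Section Potential.
Variables (d : Order.disp_t) (T : porderType d) (phi : 'I_n -> T).
Hypothesis sep : separating phi.

Lemma separating_same_comp {x y} : same_comp H x y -> phi x = phi y.
Proof.
apply: (connect_propagate (Q := fun z => phi x = phi z)) => // u v -> /orP[] uv.
  exact: sep.1 (u, v) uv.
exact/esym/(sep.1 (v, u) uv).
Qed.

Lemma separating_compE {x y} : compE G H x y -> (phi x < phi y)%O.
Proof.
case/andP=> /existsP[e /andP[eGH /andP[xe1 e2y]]] _.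
by rewrite (separating_same_comp xe1) -(separating_same_comp e2y) sep.2.
Qed.

Lemma separating_loopless_acyclic : comp_loopless G H /\ comp_acyclic G H.
Proof.
split=> [e eGH | [x [y [xy yx]]]].
  by apply/negP => /separating_same_comp e12; have := sep.2 e eGH; rewrite e12 ltxx.
have : (phi y <= phi x)%O.
  apply: (connect_propagate (Q := fun z => phi y <= phi z)%O) yx => // u v yu.
  by move/separating_compE/ltW; apply: le_trans.
by rewrite (lt_geF (separating_compE xy)).
Qed.

Lemma separating_le e : H \subset G -> e \in G -> (phi e.1 <= phi e.2)%O.
Proof.
move=> sHG eG; have [eH | eNH] := boolP (e \in H); first by rewrite sep.1.
by apply/ltW/sep.2; rewrite in_setD eNH.
Qed.

End Potential.

Lemma separating_homo d d' (T : porderType d) (T' : porderType d')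
    (f : T -> T') (phi : 'I_n -> T) :
  {homo f : x y / (x < y)%O} -> separating phi -> separating (f \o phi).
Proof. by move=> f_lt [phiH phiGH]; split=> [e /phiH /= -> | e /phiGH /f_lt]. Qed.

(* G-edges forward, H-edges backward: a separating potential is monotone along
   both. *)
Definition up_rel : rel 'I_n := fun x y => ((x, y) \in G) || ((y, x) \in H).

Definition ancestors x := [set y | connect up_rel y x].

Lemma ancestors_up x y : up_rel x y -> ancestors x \subset ancestors y.
Proof.
move=> xy; apply/subsetP => z; rewrite !inE => zx.
exact: connect_trans zx (connect1 xy).
Qed.

Section LooplessAcyclic.
Hypotheses (sHG : H \subset G) (loopless : comp_loopless G H) (acyclic : comp_acyclic G H).

Lemma up_rel_compE v y : connect up_rel v y ->
  exists2 y', same_comp H y' y & connect (compE G H) v y'.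
Proof.
pose Q b := exists2 b', same_comp H b' b & connect (compE G H) v b'.
apply: (connect_propagate (Q := Q)); last by exists v; rewrite /same_comp connect0.
move=> a b [a' a'a va'] /orP[abG | baH]; last first.
  by exists a' => //; apply: connect_trans a'a (connect1 _); rewrite /un_rel baH orbT.
have [abH | abNH] := boolP ((a, b) \in H).
  by exists a' => //; apply: connect_trans a'a (connect1 _); rewrite /un_rel abH.
have abGH : (a, b) \in G :\: H by rewrite in_setD abNH.
exists b; first exact: connect0.
exact: connect_trans va' (connect1 (compE_of_edge loopless abGH a'a)).
Qed.

Lemma ancestors_edge e : e \in G :\: H -> e.2 \notin ancestors e.1.
Proof.
move=> eGH; rewrite inE; apply/negP => /up_rel_compE[u' u'u vu'].
by apply: acyclic; exists u', e.2; split=> //; apply: compE_of_edge.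
Qed.

Lemma loopless_acyclic_separating : separating (fun x => #|ancestors x|).
Proof.
split=> [[u v] /= uvH | [u v] /= eGH].
  apply/eqP; rewrite eqn_leq !subset_leq_card // ancestors_up //.
    by rewrite /up_rel uvH orbT.
  by rewrite /up_rel (subsetP sHG _ uvH).
apply: proper_card; apply/properP; split.
  by apply: ancestors_up; case/setDP: eGH => uvG _; rewrite /up_rel uvG.
by exists v; [rewrite inE connect0 | exact: (ancestors_edge eGH)].
Qed.

End LooplessAcyclic.
End Components.

Section Faces.
Variables (R : realFieldType) (n : nat) (G H : {set 'I_n * 'I_n}).
Hypothesis sHG : H \subset G.

Lemma separating_face (phi : 'I_n -> R) :
  separating G H phi -> is_face (@inQ R n G) (@inQ R n H).
Proof.
move=> sep; pose c : 'rV[R]_n := \row_i phi i.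
have term_le0 (l : 'I_n * 'I_n -> R) e : e \in G -> 0 <= l e ->
    l e * (c 0 e.1 - c 0 e.2) <= 0.
  by move=> eG le0; rewrite !mxE mulr_ge0_le0 // subr_le0 (separating_le sep).
exists c, 0; split=> [x [l0 [l [_ l_ge0 _ ->]]] | x].
  by rewrite dotv_comb sumr_le0 // => e eG; rewrite term_le0 ?l_ge0.
split=> [xH | [[l0 [l [l0_ge0 l_ge0 l_sum hx]]] cx0]].
  split; first exact: inQ_subset sHG xH.
  case: xH => [l0 [l [_ _ _ ->]]]; rewrite dotv_comb big1 // => e eH.
  by rewrite !mxE sep.1 ?subrr ?mulr0.
apply: (inQ_restrict sHG l0_ge0 l_ge0 l_sum hx) => e eGH.
have eG : e \in G by case/setDP: eGH.
have /eqP : - (l e * (c 0 e.1 - c 0 e.2)) = 0.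
  pose F f := - (l f * (c 0 f.1 - c 0 f.2)).
  apply: (psumr_eq0P (P := fun f => f \in G) (F := F)) eG.
    by move=> f fG; rewrite oppr_ge0 term_le0 ?l_ge0.
  by rewrite sumrN -dotv_comb -hx cx0 oppr0.
rewrite oppr_eq0 mulf_eq0 subr_eq0 !mxE => /orP[/eqP //|].
by rewrite lt_eqF ?sep.2.
Qed.

Lemma face_separating : dag_edges G ->
  is_face (@inQ R n G) (@inQ R n H) -> exists phi : 'I_n -> R, separating G H phi.
Proof.
move=> dagG [c [b [valid face]]].
have b0 : b = 0 by have /face[_ <-] := inQ0 R H; rewrite dotv0.
subst b; exists (fun i => c 0 i); split=> [e eH | e /setDP[eG eNH]].
  by have /face[_ /eqP] := inQ_edge R eH; rewrite dotv_edge subr_eq0 => /eqP.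
have := valid _ (inQ_edge R eG); rewrite dotv_edge subr_le0 le_eqVlt => /orP[|//].
move=> /eqP ce; case/negP: eNH; apply: (mem_of_inQ_edge (R := R)).
  by rewrite neq_ltn dagG.
by apply/face; split; [exact: inQ_edge | rewrite dotv_edge ce subrr].
Qed.

End Faces.

Theorem mainTheorem5 (R : realFieldType) (n : nat) (G H : {set 'I_n * 'I_n})
  (hG : dag_edges G) (hHG : H \subset G) :
  is_face (@inQ R n G) (@inQ R n H) <-> (comp_loopless G H /\ comp_acyclic G H).
Proof.
split=> [/(face_separating hG)[phi] | [loopless acyclic]].
  exact: separating_loopless_acyclic.
have sep_card := loopless_acyclic_separating hHG loopless acyclic.
apply: (separating_face hHG (separating_homo (f := fun k : nat => k%:R : R) _ sep_card)).
by move=> i j; rewrite ltr_nat.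
Qed.
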